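(* Let $\mathcal{H}$ be a quasitriangular Hopf algebra with universal R-matrix $\mathcal{R}=\mathcal{R}_1\otimes\mathcal{R}_2$, and let $\mathcal{L}$ be a left $\mathcal{H}$-module algebra which is quasi-commutative, i.e. $(\mathcal{R}_2\triangleright\ell_2)(\mathcal{R}_1\triangleright\ell_1)=\ell_1\ell_2$ for all $\ell_1,\ell_2\in\mathcal{L}$. Then $\mathcal{L}$ is an $\mathcal{H}$-base algebra with the left $\mathcal{H}$-coaction $\delta(\ell):=\mathcal{R}_2\otimes\mathcal{R}_1\triangleright\ell$.
   Context: $\mathcal{H}$ is a Hopf algebra over a commutative ring $k$ (over a field of characteristic zero), with Sweedler notation $\Delta(x)=x^{(1)}\otimes x^{(2)}$; the universal R-matrix satisfies $\mathcal{R}\Delta(h)=\Delta^{op}(h)\mathcal{R}$, $(\Delta\otimes\mathrm{id})(\mathcal{R})=\mathcal{R}_{13}\mathcal{R}_{23}$, $(\mathrm{id}\otimes\Delta)(\mathcal{R})=\mathcal{R}_{13}\mathcal{R}_{12}$ (summation over the components of $\mathcal{R}$ implicit). An $\mathcal{H}$-base algebra is a left $\mathcal{H}$-module algebra and left $\mathcal{H}$-comodule algebra $\mathcal{L}$ (action $\triangleright$, coaction $\delta(\ell)=\ell^{(1)}\otimes\ell^{[2]}$ an algebra homomorphism) satisfying $\{x^{(1)}\triangleright\ell\}^{(1)}x^{(2)}\otimes\{x^{(1)}\triangleright\ell\}^{[2]}=x^{(1)}\ell^{(1)}\otimes x^{(2)}\triangleright\ell^{[2]}$ for all $x\in\mathcal{H}$,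 $\ell\in\mathcal{L}$, and $\ell_1\ell_2=(\ell_1^{(1)}\triangleright\ell_2)\ell_1^{[2]}$ for all $\ell_1,\ell_2\in\mathcal{L}$. *)

From HB Require Import structures.
From mathcomp Require Import all_boot all_order all_algebra.
Set Implicit Arguments. Unset Strict Implicit. Unset Printing Implicit Defensive.
Import GRing.Theory.
Local Open Scope ring_scope.

(* An element of A (x) B is represented by a finite formal sum,
   i.e. a list of pairs [a_i, b_i] standing for sum_i a_i (x) b_i.
   Two representatives are equal in A (x) B iff they have the same image under
   every k-bilinear map into every k-module (universal property of the
   tensor product); likewise for triple tensors with trilinear maps. *)

Section Tensors.
Variable k : comNzRingType.

Definition bilin (A B M : lmodType k) (f : A -> B -> M) : Prop :=
  (forall b, linear (fun a => f a b)) /\ (forall a, linear (f a)).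

Definition trilin (A B C M : lmodType k) (f : A -> B -> C -> M) : Prop :=
  [/\ forall b c, linear (fun a => f a b c),
      forall a c, linear (fun b => f a b c)
    & forall a b, linear (f a b)].

Definition teq2 (A B : lmodType k) (s t : seq (A * B)) : Prop :=
  forall (M : lmodType k) (f : A -> B -> M), bilin f ->
    \sum_(p <- s) f p.1 p.2 = \sum_(p <- t) f p.1 p.2.

Definition teq3 (A B C : lmodType k) (s t : seq (A * B * C)) : Prop :=
  forall (M : lmodType k) (f : A -> B -> C -> M), trilin f ->
    \sum_(p <- s) f p.1.1 p.1.2 p.2 = \sum_(p <- t) f p.1.1 p.1.2 p.2.

Definition tmul (A B : algType k) (s t : seq (A * B)) : seq (A * B) :=
  [seq (p.1 * q.1, p.2 * q.2) | p <- s, q <- t].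

Definition tlin (A B : lmodType k) (c : k) (s t : seq (A * B)) : seq (A * B) :=
  [seq (c *: p.1, p.2) | p <- s] ++ t.

End Tensors.

(* Hopf algebra (H, Delta, eps, S) over k; Delta x is a representative of
   Delta(x) = x^(1) (x) x^(2) in H (x) H. *)
Record is_hopf_algebra (k : comNzRingType) (H : algType k)
    (Delta : H -> seq (H * H)) (eps : H -> k) (S : H -> H) : Prop := {
  hopf_Delta_linear : forall c x y,
    teq2 (Delta (c *: x + y)) (tlin c (Delta x) (Delta y));
  hopf_Delta_mul : forall x y, teq2 (Delta (x * y)) (tmul (Delta x) (Delta y));
  hopf_Delta_one : teq2 (Delta 1) [:: (1, 1)];
  hopf_coassoc : forall x,
    teq3 [seq ((q.1, q.2), p.2) | p <- Delta x, q <- Delta p.1]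
         [seq ((p.1, q.1), q.2) | p <- Delta x, q <- Delta p.2];
  hopf_eps_linear : forall c x y, eps (c *: x + y) = c * eps x + eps y;
  hopf_eps_mul : forall x y, eps (x * y) = eps x * eps y;
  hopf_eps_one : eps 1 = 1;
  hopf_counit_l : forall x, \sum_(p <- Delta x) eps p.1 *: p.2 = x;
  hopf_counit_r : forall x, \sum_(p <- Delta x) eps p.2 *: p.1 = x;
  hopf_S_linear : linear S;
  hopf_antipode_l : forall x, \sum_(p <- Delta x) S p.1 * p.2 = eps x *: 1;
  hopf_antipode_r : forall x, \sum_(p <- Delta x) p.1 * S p.2 = eps x *: 1
}.

Record is_R_matrix (k : comNzRingType) (H : algType k)
    (Delta : H -> seq (H * H)) (R : seq (H * H)) : Prop := {
  Rmat_comm : forall h,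
    teq2 (tmul R (Delta h)) (tmul [seq (p.2, p.1) | p <- Delta h] R);
  (* (Delta (x) id)(R) = R13 R23 *)
  Rmat_Delta_l :
    teq3 [seq ((q.1, q.2), r.2) | r <- R, q <- Delta r.1]
         [seq ((r.1, r'.1), r.2 * r'.2) | r <- R, r' <- R];
  (* (id (x) Delta)(R) = R13 R12 *)
  Rmat_Delta_r :
    teq3 [seq ((r.1, q.1), q.2) | r <- R, q <- Delta r.2]
         [seq ((r.1 * r'.1, r'.2), r.2) | r <- R, r' <- R]
}.

Record is_module_algebra (k : comNzRingType) (H L : algType k)
    (Delta : H -> seq (H * H)) (eps : H -> k) (act : H -> L -> L) : Prop := {
  modalg_bilin : bilin act;
  modalg_one : forall l, act 1 l = l;
  modalg_mul : forall h g l, act (h * g) l = act h (act g l);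
  modalg_act_mul : forall h l l',
    act h (l * l') = \sum_(p <- Delta h) act p.1 l * act p.2 l';
  modalg_act_one : forall h, act h 1 = eps h *: 1
}.

Definition quasi_commutative (k : comNzRingType) (H L : algType k)
    (R : seq (H * H)) (act : H -> L -> L) : Prop :=
  forall l1 l2 : L, \sum_(r <- R) act r.2 l2 * act r.1 l1 = l1 * l2.

Record is_comodule_algebra (k : comNzRingType) (H L : algType k)
    (Delta : H -> seq (H * H)) (eps : H -> k) (delta : L -> seq (H * L)) : Prop := {
  comod_linear : forall c l l',
    teq2 (delta (c *: l + l')) (tlin c (delta l) (delta l'));
  comod_coassoc : forall l,
    teq3 [seq ((q.1, q.2), p.2) | p <- delta l, q <- Delta p.1]
         [seq ((p.1, q.1), q.2) | p <- delta l, q <- delta p.2];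
  comod_counit : forall l, \sum_(p <- delta l) eps p.1 *: p.2 = l;
  comod_mul : forall l l', teq2 (delta (l * l')) (tmul (delta l) (delta l'));
  comod_one : teq2 (delta 1) [:: (1, 1)]
}.

Definition is_base_algebra (k : comNzRingType) (H L : algType k)
    (Delta : H -> seq (H * H)) (eps : H -> k)
    (act : H -> L -> L) (delta : L -> seq (H * L)) : Prop :=
  [/\ is_module_algebra Delta eps act,
      is_comodule_algebra Delta eps delta,
      (forall (x : H) (l : L),
         teq2 [seq (q.1 * p.2, q.2) | p <- Delta x, q <- delta (act p.1 l)]
              [seq (p.1 * q.1, act p.2 q.2) | p <- Delta x, q <- delta l])
    &
      (forall l1 l2 : L, l1 * l2 = \sum_(p <- delta l1) act p.1 l2 * p.2)].

Definition Rcoaction (k : comNzRingType) (H L : algType k)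
    (R : seq (H * H)) (act : H -> L -> L) (l : L) : seq (H * L) :=
  [seq (r.2, act r.1 l) | r <- R].

From HB Require Import structures.
From mathcomp Require Import all_boot all_order all_algebra.
Set Implicit Arguments. Unset Strict Implicit. Unset Printing Implicit Defensive.
Import GRing.Theory.
Local Open Scope ring_scope.

(* Each axiom of the coaction [l |-> R_2 (x) R_1 |> l] is the image under the
   action of an axiom of the R-matrix: coassociativity comes from
   (id (x) Delta) R = R13 R12, multiplicativity from (Delta (x) id) R = R13 R23
   and the module-algebra property, and the compatibility with the action from
   R Delta = Delta^op R; counitality and braided commutativity are
   quasi-commutativity itself.  The unit condition is the exception:
   (eps (x) id) R is a group-like idempotent, hence a scalar multiple of 1, and
   quasi-commutativity at (1, 1) shows that this scalar acts trivially on L. *)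

Lemma linear_sumE (k : pzRingType) (U : lmodType k) (V : zmodType)
    (s : GRing.Scale.law k V) (f : U -> V) (lin_f : linear_for s f)
    (I : Type) (r : seq I) (F : I -> U) :
  f (\sum_(i <- r) F i) = \sum_(i <- r) f (F i).
Proof. exact: (linear_sum (HB.pack f (GRing.isLinear.Build k U V s f lin_f))). Qed.

Section LinearMaps.
Variable k : comNzRingType.

Lemma linearZE (U V : lmodType k) (f : U -> V) (lin_f : linear f) a u :
  f (a *: u) = a *: f u.
Proof. exact: scalable_linear. Qed.

Lemma scalarZE (U : lmodType k) (e : U -> k) (lin_e : scalar e) a u :
  e (a *: u) = a * e u.
Proof. exact: scalable_linear. Qed.

Lemma linear_comp (U V W : lmodType k) (f : V -> W) (g : U -> V) :
  linear f -> linear g -> linear (fun x => f (g x)).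
Proof. by move=> lin_f lin_g a u v; rewrite lin_g lin_f. Qed.

Lemma linear_mulr (A : algType k) (y : A) : linear (fun x : A => x * y).
Proof. by move=> a u v; rewrite mulrDl scalerAl. Qed.

Lemma linear_mull (A : algType k) (y : A) : linear (fun x : A => y * x).
Proof. by move=> a u v; rewrite mulrDr scalerAr. Qed.

Lemma linear_scale (V : lmodType k) (c : k) : linear (fun x : V => c *: x).
Proof. by move=> a u v; rewrite scalerDr !scalerA mulrC. Qed.

Lemma linear_scalar_scale (U V : lmodType k) (e : U -> k) (m : V) :
  scalar e -> linear (fun x => e x *: m).
Proof. by move=> lin_e a u v; rewrite lin_e scalerDl scalerA. Qed.

End LinearMaps.

Section HopfAlgebra.
Variables (k : comNzRingType) (H : algType k) (Delta : H -> seq (H * H)).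
Variables (eps : H -> k) (S : H -> H).
Hypothesis hopfH : is_hopf_algebra Delta eps S.

Let eps_scalar : scalar eps := hopf_eps_linear hopfH.

Lemma linear_Delta_bilin (M : lmodType k) (F : H -> H -> M) :
  bilin F -> linear (fun x => \sum_(q <- Delta x) F q.1 q.2).
Proof.
move=> bilin_F a x y /=.
rewrite (hopf_Delta_linear hopfH a x y bilin_F) /tlin big_cat big_map scaler_sumr.
by congr (_ + _); apply: eq_bigr => q _; rewrite (linearZE (bilin_F.1 _)).
Qed.

Lemma eps_Delta x : \sum_(q <- Delta x) eps q.1 * eps q.2 = eps x.
Proof.
rewrite -[in RHS](hopf_counit_l hopfH x) (linear_sumE eps_scalar).
by apply: eq_bigr => q _; rewrite (scalarZE eps_scalar).
Qed.

Definition grouplike (g : H) : Prop := teq2 (Delta g) [:: (g, g)].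

Lemma grouplike_sum (g : H) (M : lmodType k) (F : H -> H -> M) :
  grouplike g -> bilin F -> \sum_(q <- Delta g) F q.1 q.2 = F g g.
Proof. by move=> gl_g bilin_F; rewrite (gl_g _ _ bilin_F) big_seq1. Qed.

Lemma grouplike_idem_scalar (g : H) :
  grouplike g -> g * g = g -> g = eps g *: 1.
Proof.
move=> gl_g idem_g.
have g_eps : g = eps g *: g.
  rewrite -[in LHS](hopf_counit_l hopfH g).
  rewrite (grouplike_sum (F := fun a b => eps a *: b)) //.
  by split=> [b|a]; [exact: linear_scalar_scale | exact: linear_scale].
have antipode_g : S g * g = eps g *: 1.
  rewrite -(hopf_antipode_l hopfH g) (grouplike_sum (F := fun a b => S a * b)) //.
  split=> [b|a]; last exact: linear_mull.
  exact: linear_comp (linear_mulr b) (hopf_S_linear hopfH).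
have : S g * g * g = S g * g by rewrite -mulrA idem_g.
by rewrite antipode_g -scalerAl mul1r -g_eps.
Qed.

Section RMatrix.
Variable R : seq (H * H).
Hypothesis R_matrix : is_R_matrix Delta R.

Definition eps_R1 : H := \sum_(r <- R) eps r.1 *: r.2.

Lemma grouplike_eps_R1 : grouplike eps_R1.
Proof.
move=> M F bilin_F; rewrite big_seq1.
have tri : trilin (fun a b c => eps a *: F b c).
  split=> [b c|a c|a b].
  + exact: linear_scalar_scale.
  + exact: linear_comp (linear_scale (eps a)) (bilin_F.1 c).
  + exact: linear_comp (linear_scale (eps a)) (bilin_F.2 b).
have := Rmat_Delta_r R_matrix tri; rewrite !big_allpairs_dep /= => E.
rewrite (linear_sumE (linear_Delta_bilin bilin_F)).
under eq_bigr do rewrite (linearZE (linear_Delta_bilin bilin_F)) /=.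
under eq_bigr do rewrite scaler_sumr.
rewrite E (linear_sumE (bilin_F.1 _)) exchange_big /=; apply: eq_bigr => r _.
rewrite (linearZE (bilin_F.1 _)) /eps_R1 (linear_sumE (bilin_F.2 _)) scaler_sumr.
apply: eq_bigr => r' _.
by rewrite (linearZE (bilin_F.2 _)) scalerA (hopf_eps_mul hopfH) mulrC.
Qed.

Lemma eps_R1_idem : eps_R1 * eps_R1 = eps_R1.
Proof.
have tri : trilin (fun a b (c : H) => (eps a * eps b) *: c).
  split=> [b c|a c|a b].
  + by move=> a x y; rewrite /= eps_scalar mulrDl scalerDl !scalerA mulrA.
  + by move=> a' x y; rewrite /= eps_scalar mulrDr scalerDl !scalerA mulrCA.
  + exact: linear_scale.
have := Rmat_Delta_l R_matrix tri; rewrite !big_allpairs_dep /= => E.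
transitivity (\sum_(r <- R) \sum_(r' <- R) (eps r.1 * eps r'.1) *: (r.2 * r'.2)).
  rewrite /eps_R1 mulr_suml; apply: eq_bigr => r _; rewrite mulr_sumr.
  by apply: eq_bigr => r' _; rewrite -scalerAl -scalerAr scalerA.
by rewrite -E; apply: eq_bigr => r _; rewrite -scaler_suml eps_Delta.
Qed.

Lemma eps_R1_scalar : eps_R1 = eps eps_R1 *: 1.
Proof. exact: grouplike_idem_scalar grouplike_eps_R1 eps_R1_idem. Qed.

End RMatrix.
End HopfAlgebra.

Section QuasiCommutativeModuleAlgebra.
Variables (k : comNzRingType) (H L : algType k) (Delta : H -> seq (H * H)).
Variables (eps : H -> k) (S : H -> H) (R : seq (H * H)) (act : H -> L -> L).
Hypothesis hopfH : is_hopf_algebra Delta eps S.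
Hypothesis R_matrix : is_R_matrix Delta R.
Hypothesis modalgL : is_module_algebra Delta eps act.
Hypothesis quasi_commL : quasi_commutative R act.

Let eps_scalar : scalar eps := hopf_eps_linear hopfH.
Let act_linear_l l : linear (act^~ l) := (modalg_bilin modalgL).1 l.
Let act_linear_r h : linear (act h) := (modalg_bilin modalgL).2 h.
Local Notation delta := (Rcoaction R act).

Lemma Rcoaction_linear c l l' :
  teq2 (delta (c *: l + l')) (tlin c (delta l) (delta l')).
Proof.
move=> M f [f_lin_l f_lin_r].
rewrite /Rcoaction /tlin big_cat /= !big_map -big_split; apply: eq_bigr => r _ /=.
by rewrite act_linear_r f_lin_r (linearZE (f_lin_l _)).
Qed.

Lemma Rcoaction_coassoc l :
  teq3 [seq ((q.1, q.2), p.2) | p <- delta l, q <- Delta p.1]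
       [seq ((p.1, q.1), q.2) | p <- delta l, q <- delta p.2].
Proof.
move=> M f [f_lin1 f_lin2 f_lin3].
have tri : trilin (fun a b c => f b c (act a l)).
  split=> [b c|a c|a b]; [exact: linear_comp (f_lin3 b c) (act_linear_l l)
                        | exact: f_lin1 | exact: f_lin2].
have := Rmat_Delta_r R_matrix tri; rewrite !big_allpairs_dep /= => E.
rewrite /Rcoaction !big_map E exchange_big /=.
apply: eq_bigr => r _; rewrite big_map.
by apply: eq_bigr => r' _; rewrite (modalg_mul modalgL).
Qed.

Lemma Rcoaction_mul l l' :
  teq2 (delta (l * l')) (tmul (delta l) (delta l')).
Proof.
move=> M f [f_lin1 f_lin2].
have tri : trilin (fun a b c => f c (act a l * act b l')).
  split=> [b c|a c|a b]; last exact: f_lin1.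
  + exact: linear_comp (f_lin2 c) (linear_comp (linear_mulr _) (act_linear_l l)).
  + exact: linear_comp (f_lin2 c) (linear_comp (linear_mull _) (act_linear_l l')).
have := Rmat_Delta_l R_matrix tri; rewrite !big_allpairs_dep /= => E.
rewrite /Rcoaction !big_map /=.
under eq_bigr do rewrite (modalg_act_mul modalgL) (linear_sumE (f_lin2 _)).
by rewrite E; apply: eq_bigr => r _; rewrite big_map.
Qed.

Lemma Rcoaction_act_compat x l :
  teq2 [seq (q.1 * p.2, q.2) | p <- Delta x, q <- delta (act p.1 l)]
       [seq (p.1 * q.1, act p.2 q.2) | p <- Delta x, q <- delta l].
Proof.
move=> M f [f_lin1 f_lin2].
have bi : bilin (fun a b => f b (act a l)).
  by split=> [b|a]; [exact: linear_comp (f_lin2 b) (act_linear_l l) | exact: f_lin1].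
have := Rmat_comm R_matrix x bi; rewrite /tmul !big_allpairs_dep /= big_map => E.
rewrite exchange_big /= in E; apply: etrans (etrans E _) => /=.
all: apply: eq_bigr => p _; rewrite big_map; apply: eq_bigr => r _.
all: by rewrite (modalg_mul modalgL).
Qed.

Lemma Rcoaction_counit l : \sum_(p <- delta l) eps p.1 *: p.2 = l.
Proof.
rewrite big_map -[RHS]mulr1 -(quasi_commL l 1); apply: eq_bigr => r _ /=.
by rewrite (modalg_act_one modalgL) -scalerAl mul1r.
Qed.

Lemma Rcoaction_braided_comm l1 l2 :
  l1 * l2 = \sum_(p <- delta l1) act p.1 l2 * p.2.
Proof. by rewrite big_map quasi_commL. Qed.

Lemma Rcoaction_one : teq2 (delta 1) [:: (1, 1)].
Proof.
move=> M f [f_lin1 f_lin2].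
(* [R] need not be invertible (e.g. [R = 0]), so [eps_R1] need not be [1]. *)
have unit_L : eps (eps_R1 eps R) *: (1 : L) = 1.
  rewrite (linear_sumE eps_scalar) scaler_suml -[RHS]mulr1 -(quasi_commL 1 1).
  apply: eq_bigr => r _; rewrite !(modalg_act_one modalgL) -scalerAl mul1r.
  by rewrite scalerA (scalarZE eps_scalar) mulrC.
rewrite big_map big_seq1 /=.
transitivity (f (eps_R1 eps R) 1).
  rewrite (linear_sumE (f_lin1 1)); apply: eq_bigr => r _.
  by rewrite (modalg_act_one modalgL) (linearZE (f_lin1 _)) (linearZE (f_lin2 _)).
rewrite (eps_R1_scalar hopfH R_matrix) (linearZE (f_lin1 _)).
by rewrite -(linearZE (f_lin2 _)) unit_L.
Qed.

Lemma Rcoaction_comodule_algebra : is_comodule_algebra Delta eps delta.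
Proof.
split.
- exact: Rcoaction_linear.
- exact: Rcoaction_coassoc.
- exact: Rcoaction_counit.
- exact: Rcoaction_mul.
- exact: Rcoaction_one.
Qed.

End QuasiCommutativeModuleAlgebra.

Theorem proposition3p6 (k : comNzRingType) (H L : algType k)
    (Delta : H -> seq (H * H)) (eps : H -> k) (S : H -> H)
    (R : seq (H * H)) (act : H -> L -> L) :
  is_hopf_algebra Delta eps S ->
  is_R_matrix Delta R ->
  is_module_algebra Delta eps act ->
  quasi_commutative R act ->
  is_base_algebra Delta eps act (Rcoaction R act).
Proof.
move=> hopfH R_matrix modalgL quasi_commL; split => //.
- exact: Rcoaction_comodule_algebra hopfH R_matrix modalgL quasi_commL.
- exact: Rcoaction_act_compat R_matrix modalgL.
- exact: Rcoaction_braided_comm quasi_commL.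
Qed.
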